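(* Let $p\geq 0$ and let $G$ be a nearly balanced bipartite graph of order $2n-1$. Then $G$ is $2p$-Hamilton-biconnected if and only if $cl_{n+p+1}(G)$ is $2p$-Hamilton-biconnected.
   Context: A bipartite graph $G=(X,Y;E)$ is nearly balanced if $|X|=|Y|+1$; it is Hamilton-biconnected if for any two distinct $u,v\in X$ there is a Hamiltonian path with ends $u,v$. A vertex set $W$ is balanced if $|W\cap X|=|W\cap Y|$; $G$ is $2p$-Hamilton-biconnected if for every balanced $W$ with $|W|=2p$, the subgraph induced by $V(G)\setminus W$ is Hamilton-biconnected. For an integer $r$, the $r$-biclosure $cl_r(G)$ of a bipartite graph $G=(X,Y;E)$ is the unique smallest bipartite graph $H$ on the same vertex set with the same bipartition such that $G\subseteq H$ and $d_H(x)+d_H(y)<r$ for every non-adjacent pair $x\in X$, $y\in Y$; it is obtained from $G$ by repeatedly joining non-adjacent $x\in X$, $y\in Y$ with degree sum at least $r$ until no such pair remains. *)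

From mathcomp Require Import all_boot.
Set Implicit Arguments. Unset Strict Implicit. Unset Printing Implicit Defensive.

(* A bipartite graph G = (X, Y; E) on the vertex type T (a finType):
   X : {set T} is one side, Y := ~: X the other side, and the edge set
   E : {set T * T} consists of pairs (x, y) with x \in X, y \in Y
   (hypothesis E \subset setX X (~: X) in the theorem). *)

Section BipGraph.
Variable T : finType.

Definition badj (E : {set T * T}) (u v : T) : bool :=
  ((u, v) \in E) || ((v, u) \in E).

Definition bdeg (E : {set T * T}) (u : T) : nat := #|[set v | badj E u v]|.

Definition ham_path_in (E : {set T * T}) (V : {set T}) (u v : T) : Prop :=
  exists s : seq T,
    [/\ path (badj E) u s, last u s = v, uniq (u :: s)
      & (u :: s) =i V].

Definition ham_biconn_in (X : {set T}) (E : {set T * T}) (V : {set T}) : Prop :=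
  forall u v, u \in X :&: V -> v \in X :&: V -> u != v -> ham_path_in E V u v.

Definition ham_biconn2p (X : {set T}) (E : {set T * T}) (p : nat) : Prop :=
  forall W : {set T}, #|W :&: X| = #|W :&: ~: X| -> #|W| = 2 * p ->
    ham_biconn_in X E (~: W).

Definition clos_step (X : {set T}) (r : nat) (E : {set T * T}) : {set T * T} :=
  match [pick e : T * T | [&& e.1 \in X, e.2 \notin X, e \notin E
                            & r <= bdeg E e.1 + bdeg E e.2]] with
  | Some e => e |: E
  | None => E
  end.

(* r-biclosure: repeat the step until no such pair remains; at most
   #|T| * #|T| edges can ever be added, so this many iterations suffice. *)
Definition biclosure (X : {set T}) (E : {set T * T}) (r : nat) : {set T * T} :=
  iter (#|T| * #|T|) (clos_step X r) E.

End BipGraph.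

From mathcomp Require Import all_boot.
From mathcomp Require Import zify.
Set Implicit Arguments. Unset Strict Implicit. Unset Printing Implicit Defensive.

(* Adding edges preserves 2p-Hamilton-biconnectedness and the closure only adds
   edges, so it suffices to delete a single closure edge xy, x in X, y in Y,
   with d(x) + d(y) >= n + p + 1.  After removing a balanced set W of 2p
   vertices, x and y keep degree sum at least n - p + 1 = |Y \ W| + 2 in
   G - W.  If a Hamiltonian u-v path l of G - W + xy passes x = l_j, y = l_(j+1),
   the positions i with l_i ~ x and those with l_(i+1) ~ y all carry Y-vertices
   and together number at least |Y \ W| + 1, so some i is of both kinds;
   reversing the segment between the edges l_i l_(i+1) and xy (a 2-opt move)
   yields a Hamiltonian u-v path of G - W. *)

Section TwoOpt.
Variables (T : eqType) (r : rel T).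

Definition two_opt (a b : nat) (s : seq T) : seq T :=
  take a.+1 s ++ rev (drop a.+1 (take b.+1 s)) ++ drop b.+1 s.

Lemma perm_two_opt a b s : a <= b -> perm_eq (two_opt a b s) s.
Proof.
move=> ab; have {2}-> : s = take a.+1 s ++ drop a.+1 (take b.+1 s) ++ drop b.+1 s.
  by rewrite catA -{1}(take_takel s (ab : a < b.+1)) !cat_take_drop.
by rewrite perm_cat2l perm_cat2r perm_rev.
Qed.

Lemma nth_two_opt x0 a b s k : a < b < size s ->
  nth x0 (two_opt a b s) k = nth x0 s (if a < k <= b then a + b.+1 - k else k).
Proof.
case/andP=> ab bs; rewrite /two_opt nth_cat size_takel; last by lia.
case: ltnP => [ka | ak]; first by rewrite nth_take // ifN //; lia.
rewrite nth_cat size_rev size_drop size_takel; last by lia.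
case: ltnP => [kb | bk].
  rewrite nth_rev ?size_drop ?size_takel; try lia.
  rewrite nth_drop nth_take; last by lia.
  by rewrite ifT; [congr nth; lia | lia].
by rewrite nth_drop ifN; [congr nth; lia | lia].
Qed.

Lemma ohead_two_opt a b s : ohead (two_opt a b s) = ohead s.
Proof. by case: s. Qed.

Hypothesis r_sym : symmetric r.

Lemma sorted_two_opt x0 a b s : a < b -> b.+1 < size s ->
  (forall k, k.+1 < size s -> k != a -> k != b -> r (nth x0 s k) (nth x0 s k.+1)) ->
  r (nth x0 s a) (nth x0 s b) -> r (nth x0 s a.+1) (nth x0 s b.+1) ->
  sorted r (two_opt a b s).
Proof.
move=> ab bs edge cross1 cross2; have abs : a < b < size s by lia.
apply/(sortedP x0) => k; rewrite (perm_size (perm_two_opt _ (ltnW ab))) => ks.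
rewrite !nth_two_opt //; case: ifP => k_mid; case: ifP => k1_mid.
- have [-> ->] : a + b.+1 - k = (a + b - k).+1 /\ a + b.+1 - k.+1 = a + b - k by lia.
  by rewrite r_sym; apply: edge; lia.
- have [-> ->] : k = b /\ a + b.+1 - k = a.+1 by lia.
  exact: cross2.
- have [-> ->] : k = a /\ a + b.+1 - k.+1 = b by lia.
  exact: cross1.
- by apply: edge; lia.
Qed.

End TwoOpt.

Section Graph.
Variable T : finType.
Implicit Types (E F : {set T * T}) (V W S : {set T}) (l : seq T).

Lemma badj_sym E : symmetric (badj E).
Proof. by move=> a b; rewrite /badj orbC. Qed.

Lemma badj_sub E F a b : E \subset F -> badj E a b -> badj F a b.
Proof. by move=> /subsetP sEF /orP[] /sEF; rewrite /badj => ->; rewrite ?orbT. Qed.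

Lemma badj_setU1 E x y a b :
  badj ((x, y) |: E) a b = [|| (a, b) == (x, y), (b, a) == (x, y) | badj E a b].
Proof. by rewrite /badj !in_setU1; case: eqP; case: eqP; case: ((a, b) \in E). Qed.

Lemma ham_path_in_sub E F V u v : E \subset F -> ham_path_in E V u v -> ham_path_in F V u v.
Proof.
move=> sEF [s [s_path s_last s_uniq s_V]]; exists s; split => //.
by apply: sub_path s_path => a b; apply: badj_sub.
Qed.

Lemma ham_biconn2p_sub X E F p : E \subset F -> ham_biconn2p X E p -> ham_biconn2p X F p.
Proof. by move=> sEF hb W W_bal W_size u v hu hv uv; apply/(ham_path_in_sub sEF)/hb. Qed.

Definition deg_in E V z : nat := #|[set w in V | badj E z w]|.

Lemma bdeg_le_deg_in E S W z : (forall w, badj E z w -> w \in S) ->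
  bdeg E z <= deg_in E (~: W) z + #|W :&: S|.
Proof.
move=> zS; apply: leq_trans (leq_card_setU _ _); apply/subset_leq_card/subsetP => w.
by rewrite !inE; case: (w \in W) => /= zw; rewrite ?zw ?zS ?orbT.
Qed.

Definition ham_seq E V u v l : Prop :=
  [/\ ohead l = Some u, last u l = v, sorted (badj E) l & perm_eq l (enum V)].

Lemma ham_path_inP E V u v : ham_path_in E V u v <-> exists l, ham_seq E V u v l.
Proof.
split=> [[s [s_path s_last s_uniq s_V]] | [[|w s] [//= [<-] s_last s_path s_perm]]].
  exists (u :: s); split=> //; apply: uniq_perm; rewrite ?enum_uniq // => w.
  by rewrite mem_enum s_V.
exists s; split=> //; first by rewrite (perm_uniq s_perm) enum_uniq.
by move=> z; rewrite (perm_mem s_perm) mem_enum.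
Qed.

Lemma ham_seq_rev E V u v l : ham_seq E V u v l -> ham_seq E V v u (rev l).
Proof.
move=> [l_head l_last l_sorted l_perm]; split.
- case/lastP: l l_head l_last {l_sorted l_perm} => // s w _.
  by rewrite rev_rcons last_rcons => ->.
- by case: l l_head {l_last l_sorted l_perm} => // w s [<-]; rewrite rev_cons last_rcons.
- by rewrite rev_sorted; apply: sub_sorted l_sorted => a b; rewrite badj_sym.
- by rewrite perm_rev.
Qed.

Lemma ham_seq_two_opt F E V u v l a b : ham_seq F V u v l -> a < b -> b.+1 < size l ->
  (forall k, k.+1 < size l -> k != a -> k != b -> badj E (nth u l k) (nth u l k.+1)) ->
  badj E (nth u l a) (nth u l b) -> badj E (nth u l a.+1) (nth u l b.+1) ->
  ham_seq E V u v (two_opt a b l).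
Proof.
move=> [l_head l_last _ l_perm] ab bl edge cross1 cross2.
have abl : a < b < size l by rewrite ab ltnW.
have l_size : size (two_opt a b l) = size l by apply/perm_size/perm_two_opt/ltnW.
split.
- by rewrite ohead_two_opt.
- by rewrite -(nth_last u) l_size nth_two_opt // ifN ?nth_last //; lia.
- exact: sorted_two_opt (@badj_sym E) _ _ _ _ ab bl edge cross1 cross2.
- by apply: perm_trans l_perm; apply/perm_two_opt/ltnW.
Qed.

End Graph.

Section Bipartite.
Variables (T : finType) (X : {set T}).
Implicit Types (E F : {set T * T}) (V : {set T}) (l : seq T).

Lemma badj_bip E a b : E \subset setX X (~: X) -> badj E a b -> (a \in X) = (b \notin X).
Proof.
by move=> /subsetP E_bip /orP[] /E_bip; rewrite in_setX in_setC => /andP[-> /negbTE ->].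
Qed.

Lemma setU1_bip E a b :
  E \subset setX X (~: X) -> a \in X -> b \notin X -> (a, b) |: E \subset setX X (~: X).
Proof. by move=> E_bip aX bY; rewrite subUset sub1set in_setX in_setC aX bY. Qed.

Lemma crossing_index E F V x y l x0 :
  E \subset setX X (~: X) -> F \subset setX X (~: X) -> x \in X -> y \notin X ->
  sorted (badj F) l -> uniq l -> l =i V ->
  #|~: X :&: V| + 2 <= deg_in E V x + deg_in E V y ->
  exists2 i, i.+1 < size l & badj E x (nth x0 l i) && badj E y (nth x0 l i.+1).
Proof.
move=> E_bip F_bip xX yY l_sorted l_uniq l_V deg_xy.
pose at_ (i : 'I_(size l)) := nth x0 l i.
have at_inj : injective at_ by move=> i k /eqP; rewrite nth_uniq // => /eqP /val_inj.
have at_onto w : w \in V -> exists i, at_ i = w.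
  rewrite -l_V => wl; have wi : index w l < size l by rewrite index_mem.
  by exists (Ordinal wi); rewrite /at_ nth_index.
pose Ypos := [set i | at_ i \notin X].
pose A := [set i | badj E x (at_ i)].
pose B := [set i : 'I_(size l) | (i.+1 < size l) && badj E y (nth x0 l i.+1)].
have card_Ypos : #|Ypos| <= #|~: X :&: V|.
  rewrite -(card_imset _ at_inj); apply/subset_leq_card/subsetP => _ /imsetP[i + ->].
  by rewrite !inE -l_V /at_ mem_nth // andbT.
have deg_x : deg_in E V x <= #|A|.
  rewrite -(card_imset _ at_inj); apply/subset_leq_card/subsetP => w.
  by rewrite inE => /andP[/at_onto[i <-] xi]; apply: imset_f; rewrite inE.
have deg_y : deg_in E V y <= #|B| + 1.
  pose succ (i : 'I_(size l)) := nth x0 l i.+1.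
  apply: (@leq_trans #|nth x0 l 0 |: succ @: B|).
    apply/subset_leq_card/subsetP => w; rewrite inE => /andP[/at_onto[[[|i] il] <-] yi].
      by rewrite setU11.
    by apply/setU1P; right; apply/imsetP; exists (Ordinal (ltnW il)); rewrite // inE il.
  by rewrite cardsU1 addnC leq_add ?leq_imset_card ?leq_b1.
have A_Y : A \subset Ypos.
  by apply/subsetP => i; rewrite !inE => /(badj_bip E_bip); rewrite xX => <-.
have B_Y : B \subset Ypos.
  apply/subsetP => i; rewrite !inE => /andP[il /(badj_bip E_bip)].
  rewrite (negbTE yY) => /esym/negbFE yX.
  by have /(sortedP x0)/(_ i il)/(badj_bip F_bip) := l_sorted; rewrite yX /at_ => ->.
have /set0Pn[i] : A :&: B != set0.
  have /subset_leq_card : A :|: B \subset Ypos by rewrite subUset A_Y B_Y.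
  rewrite -card_gt0 cardsU; lia.
by rewrite !inE => /andP[xi /andP[il yi]]; exists i; rewrite // xi.
Qed.

End Bipartite.

Section DeleteEdge.
Variables (T : finType) (X : {set T}) (E : {set T * T}) (x y : T).
Hypotheses (E_bip : E \subset setX X (~: X)) (xX : x \in X) (yY : y \notin X).

Let F := (x, y) |: E.

Let F_bip : F \subset setX X (~: X). Proof. exact: setU1_bip. Qed.

Lemma ham_seq_del_edge_at V u v l j :
  ham_seq F V u v l -> j.+1 < size l -> nth u l j = x -> nth u l j.+1 = y ->
  #|~: X :&: V| + 2 <= deg_in E V x + deg_in E V y ->
  exists l', ham_seq E V u v l'.
Proof.
move=> hl jl lj lj1 deg_xy; have [_ _ l_sorted l_perm] := hl.
have l_uniq : uniq l by rewrite (perm_uniq l_perm) enum_uniq.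
have l_V : l =i V by move=> w; rewrite (perm_mem l_perm) mem_enum.
have nth_inj i k : i < size l -> k < size l -> nth u l i = nth u l k -> i = k.
  by move=> il kl /eqP; rewrite nth_uniq // => /eqP.
have other_edges k : k.+1 < size l -> k != j -> badj E (nth u l k) (nth u l k.+1).
  move=> kl kj; have /(sortedP u)/(_ k kl) := l_sorted.
  rewrite badj_setU1 => /or3P[/eqP[lk _] | /eqP[lk1 lk] | //].
  - by rewrite (nth_inj k j (ltnW kl) (ltnW jl)) ?eqxx ?lj in kj.
  - have := nth_inj k.+1 j kl (ltnW jl); have := nth_inj k j.+1 (ltnW kl) jl.
    by rewrite lj lj1 lk lk1 => /(_ erefl) k_j1 /(_ erefl); lia.
have [i il /andP[xi yi1]] := crossing_index u E_bip F_bip xX yY l_sorted l_uniq l_V deg_xy.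
have ij : i != j.
  by apply: contraTneq xi => ->; apply/negP => /(badj_bip E_bip); rewrite lj xX.
case: (ltngtP i j) ij => // [lt_ij | lt_ji] _.
- exists (two_opt i j l); apply: ham_seq_two_opt hl lt_ij jl _ _ _.
  + by move=> k kl _ kj; apply: other_edges.
  + by rewrite lj badj_sym.
  + by rewrite lj1 badj_sym.
- exists (two_opt j i l); apply: ham_seq_two_opt hl lt_ji il _ _ _.
  + by move=> k kl kj _; apply: other_edges.
  + by rewrite lj.
  + by rewrite lj1.
Qed.

Lemma ham_seq_del_edge V u v l :
  ham_seq F V u v l -> #|~: X :&: V| + 2 <= deg_in E V x + deg_in E V y ->
  exists l', ham_seq E V u v l'.
Proof.
move=> hl deg_xy.
pose uses_xy (j : nat) := (nth u l j, nth u l j.+1) \in [:: (x, y); (y, x)].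
case: (boolP [exists j : 'I_(size l), (j.+1 < size l) && uses_xy j]).
  case/existsP=> j /andP[jl]; rewrite /uses_xy !inE => /orP[/eqP[lj lj1] | /eqP[lj1 lj]].
    exact: ham_seq_del_edge_at hl jl lj lj1 deg_xy.
  have [l' hl'] : exists l', ham_seq E V v u l'.
    apply: (ham_seq_del_edge_at (j := size l - j.+2) (ham_seq_rev hl)) _ _ _ deg_xy.
    - by rewrite size_rev; lia.
    - rewrite nth_rev; last by lia.
      have -> : size l - (size l - j.+2).+1 = j.+1 by lia.
      by rewrite (set_nth_default u).
    - rewrite nth_rev; last by lia.
      have -> : size l - (size l - j.+2).+2 = j by lia.
      by rewrite (set_nth_default u) // ltnW.
  by exists (rev l'); apply: ham_seq_rev.
move=> /existsPn no_xy; exists l; case: hl => l_head l_last l_sorted l_perm; split=> //.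
apply/(sortedP u) => k kl; have /(sortedP u)/(_ k kl) := l_sorted.
have := no_xy (Ordinal (ltnW kl)); rewrite /= kl /uses_xy !inE badj_setU1 !xpair_eqE.
by move=> /norP[/negbTE -> /negbTE]; rewrite andbC => ->.
Qed.

Lemma ham_biconn2p_del_edge n p : #|X| = #|~: X| + 1 -> #|T| = 2 * n - 1 ->
  n + p + 1 <= bdeg E x + bdeg E y -> ham_biconn2p X F p -> ham_biconn2p X E p.
Proof.
move=> card_X card_T deg_xy hb W W_bal W_size u v uV vV uv.
have /ham_path_inP[l hl] := hb W W_bal W_size u v uV vV uv.
apply/ham_path_inP/(ham_seq_del_edge hl).
have deg_x : bdeg E x <= deg_in E (~: W) x + #|W :&: ~: X|.
  by apply: bdeg_le_deg_in => w /(badj_bip E_bip); rewrite xX inE => <-.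
have deg_y : bdeg E y <= deg_in E (~: W) y + #|W :&: X|.
  by apply: bdeg_le_deg_in => w /(badj_bip E_bip); rewrite (negbTE yY) => /esym/negbFE.
have card_W : #|W :&: X| + #|W :&: ~: X| = #|W| by rewrite -setDE cardsID.
have card_Y : #|~: X :&: W| + #|~: X :&: ~: W| = #|~: X| by rewrite -setDE cardsID.
have := cardsC X; rewrite setIC in card_Y; lia.
Qed.

End DeleteEdge.

Section Closure.
Variables (T : finType) (X : {set T}).
Implicit Types (E : {set T * T}).

Lemma clos_step_sub r E : E \subset clos_step X r E.
Proof. by rewrite /clos_step; case: pickP => [e _|_]; rewrite ?subsetUr. Qed.

Lemma clos_step_bip r E : E \subset setX X (~: X) -> clos_step X r E \subset setX X (~: X).
Proof.
rewrite /clos_step; case: pickP => // [[a b] /and4P[aX bY _ _]] E_bip.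
exact: setU1_bip.
Qed.

Lemma sub_iter_clos_step r k E : E \subset iter k (clos_step X r) E.
Proof. by elim: k => // k IHk; rewrite iterS (subset_trans IHk) ?clos_step_sub. Qed.

Lemma ham_biconn2p_clos_step n p E : E \subset setX X (~: X) ->
  #|X| = #|~: X| + 1 -> #|T| = 2 * n - 1 ->
  ham_biconn2p X (clos_step X (n + p + 1) E) p -> ham_biconn2p X E p.
Proof.
rewrite /clos_step => E_bip card_X card_T; case: pickP => // [[a b] /and4P[aX bY _ deg_ab]].
exact: (ham_biconn2p_del_edge E_bip aX bY card_X card_T deg_ab).
Qed.

Lemma ham_biconn2p_iter_clos_step n p k E : E \subset setX X (~: X) ->
  #|X| = #|~: X| + 1 -> #|T| = 2 * n - 1 ->
  ham_biconn2p X (iter k (clos_step X (n + p + 1)) E) p -> ham_biconn2p X E p.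
Proof.
move=> + card_X card_T; elim: k E => // k IHk E E_bip; rewrite iterSr => hb.
exact/(ham_biconn2p_clos_step E_bip card_X card_T)/(IHk _ (clos_step_bip _ E_bip)).
Qed.

End Closure.

Theorem lemma2p5 (T : finType) (X : {set T}) (E : {set T * T}) (n p : nat) :
  E \subset setX X (~: X) ->
  #|X| = #|~: X| + 1 ->
  #|T| = 2 * n - 1 ->
  (ham_biconn2p X E p <-> ham_biconn2p X (biclosure X E (n + p + 1)) p).
Proof.
move=> E_bip card_X card_T; split; first exact/ham_biconn2p_sub/sub_iter_clos_step.
exact: ham_biconn2p_iter_clos_step.
Qed.
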